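(* Let $k$ be a positive integer with $3\mid k$. Then $S_3(k;3)\ge 3k-3$.
   Context: Let $k,r$ be positive integers with $r\mid k$. A solution to $\mathcal{E}$ is a $k$-tuple $(x_1,\dots,x_k)$ of positive integers (not necessarily distinct) with $\sum_{i=1}^{k-1}x_i=x_k$; it lies in $[1,n]$ if all $x_i\in\{1,\dots,n\}$. Given a coloring $\chi$ of $[1,n]$ with colors in $\{0,1,\dots,r-1\}$ (viewed as integers), a solution is $r$-zero-sum if $\sum_{i=1}^k\chi(x_i)\equiv 0\pmod r$. $S_3(k;r)$ denotes the least positive integer $n$ such that every coloring $\chi:[1,n]\to\{0,1,\dots,r-1\}$ admits an $r$-zero-sum solution to $\mathcal{E}$ in $[1,n]$. *)

From mathcomp Require Import all_boot.
Set Implicit Arguments. Unset Strict Implicit. Unset Printing Implicit Defensive.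

(* A solution to E : sum_{i=1}^{k-1} x_i = x_k, with k-tuple indexed by 'I_k
   (index i : 'I_k corresponds to x_{i+1}); it lies in [1,n] if all entries do. *)
Definition is_solution (k : nat) (x : 'I_k -> nat) : Prop :=
  \sum_(i < k | (i : nat) < k.-1) x i = \sum_(i < k | (i : nat) == k.-1) x i.

Definition in_interval (n k : nat) (x : 'I_k -> nat) : Prop :=
  forall i, 1 <= x i <= n.

Definition is_coloring (n r : nat) (chi : nat -> nat) : Prop :=
  forall m, 1 <= m <= n -> chi m < r.

Definition zero_sum (r k : nat) (chi : nat -> nat) (x : 'I_k -> nat) : Prop :=
  \sum_(i < k) chi (x i) = 0 %[mod r].

Definition S3_property (k r n : nat) : Prop :=
  forall chi, is_coloring n r chi ->
    exists x : 'I_k -> nat,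
      [/\ is_solution x, in_interval n x & zero_sum r chi x].

(* For k = K + 1 with 3 | k (so K = 2 mod 3) colour x by x + 1 + s(x) mod 3, where the
   shift s vanishes below K, adds 2 on the multiples of 3 in [K, 2K), and makes the colour
   2x mod 3 from 2K on.  In a solution z_1 + ... + z_K = y inside [1, 3K - 1] every
   z_i <= y - K + 1, so the colour sum is y + K + S + colour(y) mod 3, where S is the total
   shift of the z_i.  If y < 2K all z_i <= K, S = 0 and the sum is 2y + s(y) = 2y or
   2y + 2, never 0 mod 3.  If y >= 2K, every z_i <= 2K has shift 0 or 2 mod 3,
   and only those in (K, 2K) have shift 2; two of them would force y >= 3K, so S is 0 or 2
   mod 3 and the sum is S + 2, again nonzero. *)

From mathcomp Require Import all_boot.
From mathcomp Require Import zify.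

Set Implicit Arguments.
Unset Strict Implicit.
Unset Printing Implicit Defensive.

Definition color_shift (K x : nat) : nat :=
  if x < K then 0 else if x < 2 * K then (if 3 %| x then 2 else 0) else x + 2.

Definition coloring (K x : nat) : nat := (x + 1 + color_shift K x) %% 3.

Lemma color_shift_mod3 (K x : nat) : K %% 3 = 2 -> x <= 2 * K ->
  color_shift K x %% 3 = (if (K < x < 2 * K) && (3 %| x) then 2 else 0).
Proof.
move=> hK hx; rewrite /color_shift.
case: (ltnP x K) => [hxK|hKx]; first by rewrite ltnNge ltnW.
case: (ltnP x (2 * K)) => hx2; last by rewrite andbF andFb; lia.
rewrite andbT; case: (ltnP K x) => hKx'; first by case: (3 %| x).
have -> : x = K by lia.
by case: ifP => //; lia.
Qed.

Lemma color_shift_ge (K x : nat) : 2 * K <= x -> color_shift K x = x + 2.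
Proof. by move=> hx; rewrite /color_shift !ltnNge hx (leq_trans (leq_pmull _ _) hx). Qed.

Lemma sum_pos_card (I : finType) (z : I -> nat) : (forall l, 0 < z l) ->
  \sum_l z l = \sum_l (z l).-1 + #|I|.
Proof.
move=> hz; rewrite -sum1_card -big_split /=.
by apply: eq_bigr => l _; rewrite addn1 prednK.
Qed.

Lemma leq_sum_pos1 (I : finType) (z : I -> nat) (i : I) : (forall l, 0 < z l) ->
  z i + (#|I| - 1) <= \sum_l z l.
Proof.
move=> hz; rewrite sum_pos_card // (bigD1 i) //=.
have : 0 < #|I| by apply/card_gt0P; exists i.
have := hz i; rewrite -!subn1; set c := #|I|; lia.
Qed.

Lemma leq_sum_pos2 (I : finType) (z : I -> nat) (i j : I) : (forall l, 0 < z l) ->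
  i != j -> z i + z j + (#|I| - 2) <= \sum_l z l.
Proof.
move=> hz hij; rewrite sum_pos_card // (bigD1 i) //= (bigD1 j) 1?eq_sym //=.
have : 1 < #|I| by rewrite (cardD1 i) (cardD1 j) !inE eq_sym hij.
have := hz i; have := hz j; rewrite -!subn1; set c := #|I|; lia.
Qed.

Lemma modn_sum_sparse (I : finType) (d : nat) (f : I -> nat) :
  (forall i j, i != j -> f i %% d = 0 \/ f j %% d = 0) ->
  (\sum_i f i) %% d = 0 \/ exists i, (\sum_i f i) %% d = f i %% d.
Proof.
move=> hf; rewrite -modn_summ.
case: (boolP [exists i, f i %% d != 0]) => [/existsP[i hi]|/existsPn hall].
- right; exists i; rewrite (bigD1 i) //= big1 ?addn0 ?modn_mod // => j hji.
  have hij : i != j by rewrite eq_sym.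
  by case: (hf i j hij) => [/eqP|->]; rewrite ?(negbTE hi) ?mod0n.
- by left; rewrite big1 ?mod0n // => i _; apply/eqP; rewrite -[_ == 0]negbK hall.
Qed.

Section ColoringHasNoZeroSumSolution.

Variables (K : nat) (z : 'I_K -> nat).
Hypotheses (hK : K %% 3 = 2) (hz : forall l, 0 < z l).
Let y := \sum_l z l.

Lemma sum_coloring_mod :
  \sum_l coloring K (z l) = y + K + \sum_l color_shift K (z l) %[mod 3].
Proof. by rewrite /coloring modn_summ !big_split /= sum1_card card_ord. Qed.

Lemma K_le_sum : K <= y.
Proof. by rewrite /y sum_pos_card // card_ord leq_addl. Qed.

Lemma summand_bound (l : 'I_K) : z l + (K - 1) <= y.
Proof. by have := leq_sum_pos1 l hz; rewrite card_ord. Qed.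

Lemma sum_color_shift_small : y < 2 * K -> (\sum_l color_shift K (z l)) %% 3 = 0.
Proof.
move=> hy2; rewrite -modn_summ big1 // => l _.
have hzl : z l <= K by have := summand_bound l; lia.
rewrite color_shift_mod3 //; last by lia.
by rewrite ltnNge hzl.
Qed.

Hypothesis hy : y < 3 * K.

Lemma sum_color_shift_large :
  (\sum_l color_shift K (z l)) %% 3 = 0 \/ (\sum_l color_shift K (z l)) %% 3 = 2.
Proof.
have hzl l : z l <= 2 * K by have := summand_bound l; lia.
have big_shift l : color_shift K (z l) %% 3 != 0 -> K < z l.
  by rewrite color_shift_mod3 //; case: (K < z l).
case: (modn_sum_sparse (d := 3) (f := fun l => color_shift K (z l))).
- move=> i j hij; have := leq_sum_pos2 hz hij; rewrite card_ord -/y.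
  case: (eqVneq (color_shift K (z i) %% 3) 0) => [->|/big_shift hi]; first by left.
  case: (eqVneq (color_shift K (z j) %% 3) 0) => [->|/big_shift hj]; first by right.
  lia.
- by left.
- by case=> i ->; rewrite color_shift_mod3 //; case: ifP; [right | left].
Qed.

Lemma coloring_no_zero_sum : (\sum_l coloring K (z l) + coloring K y) %% 3 != 0.
Proof.
rewrite -modnDml sum_coloring_mod modnDml /coloring modnDmr.
have hKy := K_le_sum.
case: (ltnP y (2 * K)) => hy2.
- have := sum_color_shift_small hy2.
  by rewrite /color_shift ltnNge hKy hy2 /=; case: ifP; lia.
- by rewrite color_shift_ge //; have := sum_color_shift_large; lia.
Qed.

End ColoringHasNoZeroSumSolution.

Lemma is_solutionE (K : nat) (x : 'I_K.+1 -> nat) :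
  is_solution x <-> \sum_(i < K) x (widen_ord (leqnSn K) i) = x ord_max.
Proof.
rewrite /is_solution [X in _ = X](big_pred1 ord_max); last by move=> i.
rewrite big_mkcond big_ord_recr /= ltnn addn0.
by under eq_bigr => i _ do rewrite ltn_ord.
Qed.

Theorem theorem4 (k : nat) (hk : 0 < k) (h3 : 3 %| k) :
  forall n : nat, 0 < n -> S3_property k 3 n -> 3 * k - 3 <= n.
Proof.
move=> n _ HS; case: k hk h3 HS => [//|K] _ h3 HS.
have hK : K %% 3 = 2 by move: h3; lia.
rewrite leqNgt; apply/negP => hn.
have hcol : is_coloring n 3 (coloring K) by move=> m _; exact: ltn_pmod.
have [x [/is_solutionE hsol hint]] := HS _ hcol.
rewrite /zero_sum big_ord_recr /= -hsol mod0n; apply/eqP.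
set z := fun i : 'I_K => x (widen_ord (leqnSn K) i).
have hz l : 0 < z l by case/andP: (hint (widen_ord (leqnSn K) l)).
have hy : \sum_l z l < 3 * K by rewrite hsol; case/andP: (hint ord_max) => _; lia.
exact: coloring_no_zero_sum hK hz hy.
Qed.
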